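(* Let $(Z,\tau)$ be a topological space with a countable basis of open sets. For every $R>0$ let $f_R,\,g_R:Z\to\mathbb{R}$ be upper semicontinuous functions such that $$f_R\le g_R\le f_{R+\epsilon}\quad\text{on } Z\qquad\text{for all } R>0,\ \epsilon>0.$$ Then the set of $R>0$ for which $f_R\not\equiv g_R$ on $Z$ is at most countable. *)

From Stdlib Require Import Reals.
Open Scope R_scope.

Record topology (Z : Type) : Type := {
  is_open : (Z -> Prop) -> Prop;
  open_empty : is_open (fun _ => False);
  open_full : is_open (fun _ => True);
  open_union : forall (I : Type) (U : I -> Z -> Prop),
      (forall i, is_open (U i)) -> is_open (fun z => exists i, U i z);
  open_inter : forall U V, is_open U -> is_open V ->
      is_open (fun z => U z /\ V z)
}.
Arguments is_open {Z} t U.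

Definition second_countable {Z : Type} (t : topology Z) : Prop :=
  exists B : nat -> Z -> Prop,
    (forall n, is_open t (B n)) /\
    (forall U, is_open t U -> forall z, U z ->
       exists n, B n z /\ (forall y, B n y -> U y)).

Definition usc {Z : Type} (t : topology Z) (f : Z -> R) : Prop :=
  forall a : R, is_open t (fun z => f z < a).

Definition at_most_countable (S : R -> Prop) : Prop :=
  exists h : R -> nat, forall x y, S x -> S y -> h x = h y -> x = y.

(* Since [Z] is second countable and the rationals are countable, each [R] with
   [f_R z < g_R z] can be tagged by a pair (basic open [B], rational [q]) with
   [f_R < q] on [B] and [q < g_R z] at some point [z] of [B].  If [R < R'] shared
   a tag, then at that point [g_R z <= f_R' z < q < g_R z]; so the tagging is
   injective. *)
From Stdlib Require Import Reals.
From Stdlib Require Import Lra Lia ZArith Cantor ClassicalEpsilon.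
Open Scope R_scope.

Definition ratio (a b c : nat) : R := (INR a - INR b) / INR (S c).

Lemma IZR_as_INR_diff m : IZR m = INR (Z.to_nat m) - INR (Z.to_nat (- m)).
Proof.
  assert (H : (Z.of_nat (Z.to_nat m) - Z.of_nat (Z.to_nat (- m)) = m)%Z) by lia.
  rewrite !INR_IZR_INZ, <- minus_IZR, H. reflexivity.
Qed.

Lemma ratio_dense x y : x < y -> exists a b c, x < ratio a b c < y.
Proof.
  intros Hxy.
  destruct (archimed_cor1 (y - x)) as [[|c] [Hc Hc0]]; [lra | lia |].
  pose (m := up (x * INR (S c))).
  destruct (archimed (x * INR (S c))) as [Hm1 Hm2]; fold m in Hm1, Hm2.
  exists (Z.to_nat m), (Z.to_nat (- m)), c.
  unfold ratio; rewrite <- IZR_as_INR_diff.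
  assert (Hpos : 0 < INR (S c)) by (apply lt_0_INR; lia).
  assert (Hstep : 1 < (y - x) * INR (S c)).
  { apply (Rmult_lt_compat_r (INR (S c))) in Hc; [|lra].
    rewrite Rinv_l in Hc by lra. lra. }
  split; apply (Rmult_lt_reg_r (INR (S c))); try lra;
    unfold Rdiv; rewrite Rmult_assoc, Rinv_l; lra.
Qed.

Definition decode (k : nat) : nat * R :=
  let (n, r) := Cantor.of_nat k in
  let (a, r') := Cantor.of_nat r in
  let (b, c) := Cantor.of_nat r' in
  (n, ratio a b c).

Lemma decode_onto n a b c : exists k, decode k = (n, ratio a b c).
Proof.
  exists (Cantor.to_nat (n, Cantor.to_nat (a, Cantor.to_nat (b, c)))).
  unfold decode; rewrite !cancel_of_to; reflexivity.
Qed.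

Section Separation.

Variables (Z : Type) (t : topology Z) (B : nat -> Z -> Prop).
Hypothesis B_basis : forall U, is_open t U -> forall z, U z ->
  exists n, B n z /\ (forall y, B n y -> U y).

Definition separating_tag (f g : Z -> R) (k : nat) : Prop :=
  (forall y, B (fst (decode k)) y -> f y < snd (decode k)) /\
  exists z, B (fst (decode k)) z /\ snd (decode k) < g z.

Lemma usc_separating_tag f g z :
  usc t f -> f z < g z -> exists k, separating_tag f g k.
Proof.
  intros Hf Hfg.
  destruct (ratio_dense _ _ Hfg) as (a & b & c & Hfq & Hqg).
  destruct (B_basis _ (Hf (ratio a b c)) z Hfq) as (n & Hz & Hbelow).
  destruct (decode_onto n a b c) as [k Hk].
  exists k; unfold separating_tag; rewrite Hk; simpl.
  split; [exact Hbelow | now exists z].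
Qed.

Lemma separating_tag_disjoint f1 g1 f2 g2 k :
  (forall z, g1 z <= f2 z) ->
  separating_tag f1 g1 k -> separating_tag f2 g2 k -> False.
Proof.
  intros Hle [_ (z & Hz & Hq)] [Hbelow _].
  specialize (Hbelow z Hz); specialize (Hle z); lra.
Qed.

End Separation.

Lemma at_most_countable_of_tags (S : R -> Prop) (tag : R -> nat -> Prop) :
  (forall x, S x -> exists k, tag x k) ->
  (forall x y k, S x -> S y -> x < y -> tag x k -> tag y k -> False) ->
  at_most_countable S.
Proof.
  intros Hex Hdisj.
  exists (fun x => epsilon (inhabits 0%nat) (tag x)).
  intros x y Sx Sy Heq.
  pose proof (epsilon_spec (inhabits 0%nat) (tag x) (Hex x Sx)) as Tx.
  pose proof (epsilon_spec (inhabits 0%nat) (tag y) (Hex y Sy)) as Ty.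
  rewrite Heq in Tx.
  destruct (Rtotal_order x y) as [Hxy | [Hxy | Hxy]];
    [exfalso; eauto | exact Hxy | exfalso; eauto].
Qed.

Theorem lemma2p1 (Z : Type) (t : topology Z) (f g : R -> Z -> R) :
  second_countable t ->
  (forall R0, 0 < R0 -> usc t (f R0) /\ usc t (g R0)) ->
  (forall R0 eps, 0 < R0 -> 0 < eps -> forall z : Z,
      f R0 z <= g R0 z /\ g R0 z <= f (R0 + eps) z) ->
  at_most_countable (fun R0 => 0 < R0 /\ exists z : Z, f R0 z <> g R0 z).
Proof.
  intros [B [_ HB]] Husc Hle.
  apply (at_most_countable_of_tags _
           (fun R0 => separating_tag Z B (f R0) (g R0))).
  - intros R0 [HR [z Hz]].
    apply (usc_separating_tag _ t _ HB _ _ z (proj1 (Husc R0 HR))).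
    destruct (Hle R0 1 HR Rlt_0_1 z); lra.
  - intros x y k [Hx _] _ Hxy.
    apply separating_tag_disjoint; intros z.
    destruct (Hle x (y - x) Hx ltac:(lra) z) as [_ Hgf].
    now replace (x + (y - x)) with y in Hgf by ring.
Qed.
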